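(* Let $T\in\mathcal{BC}(X)$ and $s\in\mathbb H$ with $\|T\|<|s|$. Then the series $\sum_{m=1}^\infty\sum_{k=1}^mT^{m-k}\bar T^{k-1}s^{-1-m}$ and $\sum_{m=1}^\infty\sum_{k=1}^ms^{-1-m}T^{m-k}\bar T^{k-1}$ converge in operator norm, and $$\sum_{m=1}^\infty\sum_{k=1}^mT^{m-k}\bar T^{k-1}s^{-1-m}=\sum_{m=1}^\infty\sum_{k=1}^ms^{-1-m}T^{m-k}\bar T^{k-1}=\mathcal Q_{c,s}(T)^{-1}.$$
   Context: $\mathbb H$ denotes the quaternions with units $e_1,e_2,e_3$. $X=X_{\mathbb R}\otimes\mathbb H$ is a two-sided quaternionic Banach module over a real Banach space $X_{\mathbb R}$; $\mathcal{BC}(X)$ is the set of $T=T_0+\sum_{i=1}^3T_ie_i$ with pairwise commuting $T_i\in\mathcal B(X_{\mathbb R})$; $\bar T=T_0-\sum T_ie_i$; $\mathcal Q_{c,s}(T)=s^2\mathcal I-s(T+\bar T)+T\bar T$. *)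

From HB Require Import structures.
From mathcomp Require Import all_boot all_order all_algebra.
From mathcomp Require Import all_classical all_reals all_analysis.
Set Implicit Arguments. Unset Strict Implicit. Unset Printing Implicit Defensive.
Import Order.TTheory GRing.Theory Num.Theory.
Import numFieldNormedType.Exports.
Local Open Scope ring_scope.
Local Open Scope classical_set_scope.

(* Quaternions with coefficients in A : x = q0 + q1 e1 + q2 e2 + q3 e3. *)
Record quat (A : Type) := Quat { q0 : A; q1 : A; q2 : A; q3 : A }.

Section QuatGen.
Variables (A B C : Type) (Cz : zmodType).

(* Hamilton product with a coefficient multiplication "mul"; the order of the
   units e_i e_j is that of the arguments (e1 e2 = e3, e2 e3 = e1, e3 e1 = e2). *)
Definition qmulG (mul : A -> B -> Cz) (p : quat A) (q : quat B) : quat Cz :=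
  Quat
    (mul (q0 p) (q0 q) - mul (q1 p) (q1 q) - mul (q2 p) (q2 q) - mul (q3 p) (q3 q))
    (mul (q0 p) (q1 q) + mul (q1 p) (q0 q) + mul (q2 p) (q3 q) - mul (q3 p) (q2 q))
    (mul (q0 p) (q2 q) - mul (q1 p) (q3 q) + mul (q2 p) (q0 q) + mul (q3 p) (q1 q))
    (mul (q0 p) (q3 q) + mul (q1 p) (q2 q) - mul (q2 p) (q1 q) + mul (q3 p) (q0 q)).

Definition qadd (p q : quat Cz) : quat Cz :=
  Quat (q0 p + q0 q) (q1 p + q1 q) (q2 p + q2 q) (q3 p + q3 q).
Definition qopp (p : quat Cz) : quat Cz :=
  Quat (- q0 p) (- q1 p) (- q2 p) (- q3 p).
Definition qsub (p q : quat Cz) : quat Cz := qadd p (qopp q).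
Definition qconj (p : quat Cz) : quat Cz :=
  Quat (q0 p) (- q1 p) (- q2 p) (- q3 p).
Definition qsum (m n : nat) (F : nat -> quat Cz) : quat Cz :=
  Quat (\sum_(m <= i < n) q0 (F i)) (\sum_(m <= i < n) q1 (F i))
       (\sum_(m <= i < n) q2 (F i)) (\sum_(m <= i < n) q3 (F i)).
End QuatGen.

Section Quaternions.
Variable R : realType.

Definition H := quat R.
Definition hmul (p q : H) : H := qmulG (fun a b : R => a * b) p q.
Definition hone : H := Quat 1 0 0 0.
Definition habs (p : H) : R :=
  Num.sqrt (q0 p ^+ 2 + q1 p ^+ 2 + q2 p ^+ 2 + q3 p ^+ 2).
Definition hinv (p : H) : H :=
  let n := habs p ^+ 2 in
  Quat (q0 p / n) (- q1 p / n) (- q2 p / n) (- q3 p / n).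
Definition hpow (p : H) (n : nat) : H := iter n (hmul p) hone.

Variable V : normedModType R.

Definition op := V -> V.
Definition bounded_op (f : op) : Prop :=
  (forall (a : R) (u v : V), f (a *: u + v) = a *: f u + f v) /\ continuous f.
Definition opnorm (f : op) : R := sup [set `|f x| | x in [set x : V | `|x| <= 1]].

Definition qop := quat op.
Definition in_BC (T : qop) : Prop :=
  [/\ bounded_op (q0 T), bounded_op (q1 T), bounded_op (q2 T), bounded_op (q3 T)
    & forall f g, f \in [:: q0 T; q1 T; q2 T; q3 T] ->
        g \in [:: q0 T; q1 T; q2 T; q3 T] -> f \o g = g \o f].

Definition bounded_qop (T : qop) : Prop :=
  [/\ bounded_op (q0 T), bounded_op (q1 T), bounded_op (q2 T) & bounded_op (q3 T)].

Definition qop_mul (S T : qop) : qop := qmulG (fun f g : op => f \o g) S T.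
Definition qop_id : qop := Quat (@id V) 0 0 0.
Definition qop_pow (T : qop) (n : nat) : qop := iter n (qop_mul T) qop_id.
Definition hqop_mul (s : H) (T : qop) : qop := qmulG (fun (a : R) (f : op) => a *: f) s T.
Definition qoph_mul (T : qop) (s : H) : qop := qmulG (fun (f : op) (a : R) => a *: f) T s.
Definition qopnorm (T : qop) : R :=
  opnorm (q0 T) + opnorm (q1 T) + opnorm (q2 T) + opnorm (q3 T).

(* X = X_R (x) H, x = x0 + x1 e1 + x2 e2 + x3 e3, and the action of T on X *)
Definition X := quat V.
Definition qop_apply (T : qop) (x : X) : X := qmulG (fun (f : op) (v : V) => f v) T x.

Definition Qcs (T : qop) (s : H) : qop :=
  qadd (qsub (hqop_mul (hmul s s) qop_id) (hqop_mul s (qadd T (qconj T))))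
       (qop_mul T (qconj T)).

Definition series_right (T : qop) (s : H) (N : nat) : qop :=
  qsum 1 N.+1 (fun m => qsum 1 m.+1 (fun k =>
    qoph_mul (qop_mul (qop_pow T (m - k)) (qop_pow (qconj T) (k - 1)))
             (hpow (hinv s) (m.+1)))).
Definition series_left (T : qop) (s : H) (N : nat) : qop :=
  qsum 1 N.+1 (fun m => qsum 1 m.+1 (fun k =>
    hqop_mul (hpow (hinv s) (m.+1))
             (qop_mul (qop_pow T (m - k)) (qop_pow (qconj T) (k - 1))))).
End Quaternions.

(* The components of T commute, so they lie in the bicommutant K of
   {T0, T1, T2, T3}, a commutative ring of bounded operators that is closed
   under operator-norm limits. Viewed as a quaternion t over K, T has central
   a = t + tbar = 2 T0 and b = t tbar = T0^2 + T1^2 + T2^2 + T3^2, so the inner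
   sums Σ_k t^(m-k) tbar^(k-1) are the Lucas sequence U_m(a, b), and both series
   have the partial sums F_N = Σ_(m <= N) U_m s^(-1-m). The recurrence
   U_(m+2) = a U_(m+1) - b U_m telescopes:
   Q_{c,s}(T) F_N = 1 - U_(N+1) s^(-N) + b U_N s^(-1-N).
   As ||U_m|| <= m ||T||^(m-1) and ||T|| < |s|, the F_N are Cauchy and the error
   terms decay geometrically, so their limit is a two-sided inverse of
   Q_{c,s}(T). *)

From HB Require Import structures.
From mathcomp Require Import all_boot all_order all_algebra.
From mathcomp Require Import all_classical all_reals all_analysis.
From mathcomp Require Import ring lra zify.
Set Implicit Arguments. Unset Strict Implicit. Unset Printing Implicit Defensive.
Import Order.TTheory GRing.Theory Num.Theory.
Import numFieldNormedType.Exports.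
Local Open Scope ring_scope.
Local Open Scope classical_set_scope.

Section RealSequences.
Variable R : realType.

Lemma lerD4 (a b c d a' b' c' d' : R) :
  a <= a' -> b <= b' -> c <= c' -> d <= d' -> a + b + c + d <= a' + b' + c' + d'.
Proof. by move=> *; rewrite !lerD. Qed.

Lemma le0_of_cvg0 (c : R) (e : nat -> R) :
  e @ \oo --> 0 -> (forall N, c <= e N) -> c <= 0.
Proof.
move=> e0 ce; rewrite -(cvg_lim _ e0) //.
by apply: limr_ge; [exact: cvgP e0 | exact: nearW].
Qed.

Lemma bernoulli_ineq (d : R) n : 0 <= d -> 1 + n%:R * d <= (1 + d) ^+ n.
Proof.
move=> d0; elim: n => [|n IH]; first by rewrite mul0r addr0 expr0.
rewrite exprS -natr1 mulrDl mul1r.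
have : 0 <= n%:R * d by rewrite mulr_ge0.
have : 0 <= (1 + d) ^+ n by rewrite exprn_ge0 // addr_ge0.
nra.
Qed.

Lemma natr_exp_bounded (r : R) : 0 <= r < 1 ->
  exists2 C, 0 <= C & forall m, m.+1%:R * r ^+ m <= C.
Proof.
move=> /andP [r0 r1]; have [->|rn0] := eqVneq r 0.
  by exists 1 => // -[|m]; rewrite ?expr0 ?mulr1 // expr0n mulr0.
have rp : 0 < r by rewrite lt_def rn0.
(* With r (1 + d) = 1, Bernoulli's inequality bounds (1 + m d) r^m by 1. *)
pose d := r^-1 - 1.
have d0 : 0 < d by rewrite subr_gt0 invf_gt1.
have rd : r * (1 + d) = 1 by rewrite addrC subrK mulfV.
exists (1 + d^-1) => [|m]; first by rewrite addr_ge0 // invr_ge0 ltW.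
have dV0 : 0 <= d^-1 by rewrite invr_ge0 ltW.
have le_Sm : m.+1%:R <= (1 + d^-1) * (1 + m%:R * d).
  have -> : (1 + d^-1) * (1 + m%:R * d) = m.+1%:R + (d^-1 + m%:R * d).
    by rewrite -natr1; field; rewrite gt_eqF.
  by rewrite lerDl addr_ge0 // mulr_ge0 // ltW.
apply: le_trans (ler_wpM2r (exprn_ge0 _ r0) le_Sm) _.
rewrite -mulrA -[leRHS]mulr1; apply: ler_wpM2l; first by rewrite addr_ge0.
rewrite -[leRHS](expr1n _ m) -[X in _ <= X ^+ _]rd exprMn [_ * r ^+ m]mulrC.
by apply: ler_wpM2l; [exact: exprn_ge0 | apply: bernoulli_ineq; exact: ltW].
Qed.

Lemma natr_exp_le_geometric (r : R) : 0 <= r < 1 ->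
  exists th C, [/\ 0 < th, th < 1, 0 <= C & forall m, m.+1%:R * r ^+ m <= C * th ^+ m].
Proof.
move=> /andP [r0 r1]; pose th := (1 + r) / 2.
have th0 : 0 < th by rewrite divr_gt0 // ltr_pwDl.
have th1 : th < 1 by rewrite ltr_pdivrMr // mul1r; lra.
have [C C0 HC] : exists2 C, 0 <= C & forall m, m.+1%:R * (r / th) ^+ m <= C.
  apply: natr_exp_bounded; rewrite divr_ge0 ?(ltW th0) //=.
  by rewrite ltr_pdivrMr // mul1r /th; lra.
exists th, C; split=> // m.
have -> : r ^+ m = (r / th) ^+ m * th ^+ m by rewrite expr_div_n divfK // expf_neq0 ?gt_eqF.
by rewrite mulrA ler_wpM2r // exprn_ge0 // ltW.
Qed.

Lemma geometric_sum_le (th : R) M N : 0 <= th < 1 ->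
  \sum_(M <= i < N) th ^+ i <= th ^+ M / (1 - th).
Proof.
move=> /andP [th0 th1]; have th1' : 0 < 1 - th by rewrite subr_gt0.
have [MN|NM] := leqP M N; last by rewrite big_geq ?(ltnW NM) // divr_ge0 ?exprn_ge0 // ltW.
rewrite -(subnKC MN) geometric_partial_tail geometric_seriesE ?lt_eqF //=.
by rewrite ler_pM2r ?invr_gt0 // ler_piMr ?exprn_ge0 // gerBl exprn_ge0.
Qed.
End RealSequences.

Section BoundedLinear.
Variables (R : realType) (V : normedModType R).
Implicit Types (f g : V -> V) (x : V).

Definition linear_op f := forall (a : R) u v, f (a *: u + v) = a *: f u + f v.

Definition bounded_linear f :=
  linear_op f /\ exists M : R, 0 <= M /\ forall x, `|f x| <= M * `|x|.

Section LinearOp.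
Variables (f : V -> V) (lf : linear_op f).

Lemma linear_op0 : f 0 = 0.
Proof.
have := lf 1 0 0; rewrite !scale1r addr0 => ff.
by apply: (addrI (f 0)); rewrite addr0 -ff.
Qed.

Lemma linear_opD u v : f (u + v) = f u + f v.
Proof. by rewrite -[u]scale1r lf !scale1r. Qed.

Lemma linear_opZ a u : f (a *: u) = a *: f u.
Proof. by rewrite -[a *: u]addr0 lf linear_op0 addr0. Qed.

Lemma linear_opN u : f (- u) = - f u.
Proof. by rewrite -scaleN1r linear_opZ scaleN1r. Qed.

Lemma linear_opB u v : f (u - v) = f u - f v.
Proof. by rewrite linear_opD linear_opN. Qed.

Lemma linear_op_compZ (c : R) : f \o (c *: id) = c *: f.
Proof. by apply/funext => v; rewrite /= !scalrfctE linear_opZ. Qed.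
End LinearOp.

Lemma bounded_opP f : bounded_op f <-> bounded_linear f.
Proof.
pose lin (lf : linear_op f) : {linear V -> V} :=
  HB.pack f (GRing.isLinear.Build R V V *:%R f lf).
split=> -[lf bf]; split=> //.
  have /linear_bounded_continuous/linear_boundedP/pinfty_ex_gt0 [M M0 fM] :
    continuous (lin lf) by [].
  by exists M; split=> //; apply: ltW.
have [M [M0 fM]] := bf.
suff : continuous (lin lf) by [].
apply/linear_bounded_continuous/linear_boundedP.
by near=> r => x; apply: (le_trans (fM x)); apply: ler_wpM2r.
Unshelve. all: by end_near.
Qed.

Lemma bounded_linear0 : bounded_linear 0.
Proof.
split; first by move=> a u v /=; rewrite scaler0 addr0.
by exists 0; split=> // x; rewrite normr0 mul0r.
Qed.

Lemma bounded_linear_id : bounded_linear id.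
Proof. by split=> //; exists 1; split=> // x; rewrite mul1r. Qed.

Lemma bounded_linearD f g :
  bounded_linear f -> bounded_linear g -> bounded_linear (f + g).
Proof.
move=> [lf [M [M0 fM]]] [lg [N [N0 gN]]]; split.
  by move=> a u v; rewrite !addrfctE lf lg scalerDr addrACA.
exists (M + N); split; first exact: addr_ge0.
by move=> x; rewrite addrfctE mulrDl (le_trans (ler_normD _ _)) // lerD.
Qed.

Lemma bounded_linearN f : bounded_linear f -> bounded_linear (- f).
Proof.
move=> [lf [M [M0 fM]]]; split.
  by move=> a u v; rewrite !opprfctE lf opprD scalerN.
by exists M; split=> // x; rewrite opprfctE normrN.
Qed.

Lemma bounded_linearZ (r : R) f : bounded_linear f -> bounded_linear (r *: f).
Proof.
move=> [lf [M [M0 fM]]]; split.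
  by move=> a u v; rewrite !scalrfctE lf scalerDr !scalerA mulrC.
exists (`|r| * M); split; first exact: mulr_ge0.
by move=> x; rewrite scalrfctE normrZ -mulrA ler_wpM2l.
Qed.

Lemma bounded_linear_comp f g :
  bounded_linear f -> bounded_linear g -> bounded_linear (f \o g).
Proof.
move=> [lf [M [M0 fM]]] [lg [N [N0 gN]]]; split; first by move=> a u v /=; rewrite lg lf.
exists (M * N); split; first exact: mulr_ge0.
by move=> x /=; rewrite (le_trans (fM _)) // -mulrA ler_wpM2l.
Qed.

Lemma opnorm_le f c : (forall x, `|x| <= 1 -> `|f x| <= c) -> opnorm f <= c.
Proof.
move=> fc; apply: ge_sup; first by exists `|f 0|, 0 => //=; rewrite normr0.
by move=> _ [x /= x1 <-]; apply: fc.
Qed.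

Lemma opnorm_ub f x : bounded_linear f -> `|x| <= 1 -> `|f x| <= opnorm f.
Proof.
move=> [_ [M [M0 fM]]] x1; apply: sup_upper_bound; last by exists x.
split; first by exists `|f 0|, 0 => //=; rewrite normr0.
exists M => _ [y /= y1 <-]; apply: (le_trans (fM y)).
by rewrite -[leRHS]mulr1 ler_wpM2l.
Qed.

Lemma opnorm_ge0 f : bounded_linear f -> 0 <= opnorm f.
Proof.
move=> bf; apply: le_trans (opnorm_ub (x := 0) bf _); last by rewrite normr0.
exact: normr_ge0.
Qed.

Lemma opnormP f x : bounded_linear f -> `|f x| <= opnorm f * `|x|.
Proof.
move=> bf; have [->|x0] := eqVneq x 0; first by rewrite linear_op0 ?normr0 ?mulr0 //; case: bf.
have nx : 0 < `|x| by rewrite normr_gt0.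
have := opnorm_ub (x := `|x|^-1 *: x) bf.
rewrite linear_opZ; last by case: bf.
rewrite !normrZ normfV normr_id mulVf ?gt_eqF // lexx => /(_ isT).
by rewrite -ler_pdivlMl ?invr_gt0 // invrK mulrC.
Qed.

Lemma opnorm_le_mul f c :
  0 <= c -> (forall x, `|f x| <= c * `|x|) -> opnorm f <= c.
Proof.
move=> c0 fc; apply: opnorm_le => x x1; apply: (le_trans (fc x)).
by rewrite -[leRHS]mulr1 ler_wpM2l.
Qed.

Lemma opnorm0 : opnorm (0 : V -> V) = 0.
Proof.
apply/eqP; rewrite eq_le opnorm_ge0 ?andbT; last exact: bounded_linear0.
by apply: opnorm_le => x _ /=; rewrite normr0.
Qed.

Lemma opnorm_id : opnorm (@id V) <= 1.
Proof. exact: opnorm_le. Qed.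

Lemma opnormD f g :
  bounded_linear f -> bounded_linear g -> opnorm (f + g) <= opnorm f + opnorm g.
Proof.
move=> bf bg; apply: opnorm_le => x x1 /=.
by rewrite (le_trans (ler_normD _ _)) // lerD // opnorm_ub.
Qed.

Lemma opnormN f : bounded_linear f -> opnorm (- f) <= opnorm f.
Proof. by move=> bf; apply: opnorm_le => x x1 /=; rewrite normrN opnorm_ub. Qed.

Lemma opnormZ (r : R) f : bounded_linear f -> opnorm (r *: f) <= `|r| * opnorm f.
Proof. by move=> bf; apply: opnorm_le => x x1 /=; rewrite normrZ ler_wpM2l // opnorm_ub. Qed.

Lemma opnorm_comp f g :
  bounded_linear f -> bounded_linear g -> opnorm (f \o g) <= opnorm f * opnorm g.
Proof.
move=> bf bg; apply: opnorm_le => x x1 /=.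
by rewrite (le_trans (opnormP _ bf)) // ler_wpM2l ?opnorm_ge0 // opnorm_ub.
Qed.
End BoundedLinear.

Lemma commute_lim (R : realType) (V : normedModType R)
    (g : nat -> V -> V) (G h : V -> V) (d : nat -> R) :
  d @ \oo --> 0 -> (forall N x, `|g N x - G x| <= d N * `|x|) ->
  bounded_linear h -> (forall N v, g N (h v) = h (g N v)) ->
  forall v, G (h v) = h (G v).
Proof.
move=> d0 gG [lh [M [M0 hM]]] gh v.
apply/eqP; rewrite -subr_eq0 -normr_le0.
apply: (le0_of_cvg0 (e := fun N => d N * (`|h v| + M * `|v|))).
  by rewrite -(mul0r (`|h v| + M * `|v|)); apply: cvgMr_tmp.
move=> N; have -> : G (h v) - h (G v) = (G (h v) - g N (h v)) + h (g N v - G v).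
  by rewrite linear_opB // gh addrA subrK.
rewrite mulrDr (le_trans (ler_normD _ _)) // lerD //; first by rewrite distrC gG.
by rewrite (le_trans (hM _)) // mulrCA ler_wpM2l.
Qed.

Lemma bounded_linear_lim (R : realType) (V : completeNormedModType R)
    (g : nat -> V -> V) (d : nat -> R) :
  (forall N, bounded_linear (g N)) -> d @ \oo --> 0 ->
  (forall M N, (M <= N)%N -> forall x, `|g N x - g M x| <= d M * `|x|) ->
  exists2 G, bounded_linear G & forall N x, `|g N x - G x| <= d N * `|x|.
Proof.
move=> bg d0 gd.
have cvg_g x : cvg (g ^~ x @ \oo).
  apply/cauchy_cvgP; apply: cauchy_exP => e e0.
  have ex0 : 0 < e / (`|x| + 1) by rewrite divr_gt0 // ltr_wpDl.
  have [M _ dM] : \forall M \near \oo, `|d M| < e / (`|x| + 1).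
    by move/cvgr_dist_lt : d0 => /(_ _ ex0); apply: filterS => n; rewrite sub0r normrN.
  exists (g M x), M => // n /= Mn; rewrite -ball_normE /ball_ /= distrC.
  rewrite (le_lt_trans (gd M n Mn x)) // (le_lt_trans (y := `|d M| * (`|x| + 1))) //.
    rewrite (le_trans (ler_norm _)) // normrM normr_id.
    by apply: ler_wpM2l; rewrite ?lerDl.
  by rewrite -ltr_pdivlMr ?ltr_wpDl // (dM M (leqnn M)).
pose G x := lim (g ^~ x @ \oo).
have gG x : g ^~ x @ \oo --> G x by apply: cvg_g.
have gGd N x : `|g N x - G x| <= d N * `|x|.
  have gNG : (fun n => `|g N x - g n x|) @ \oo --> `|g N x - G x|.
    by apply: cvg_norm; apply: cvgB => //; apply: cvg_cst.
  rewrite -(cvg_lim _ gNG) //; apply: limr_le; first exact: cvgP gNG.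
  by near=> n; rewrite distrC gd //; near: n; exists N.
exists G => //; split.
  move=> a u v; have glin : g ^~ (a *: u + v) = (fun n => a *: g n u + g n v).
    by apply/funext => n; rewrite (bg n).1.
  have := gG (a *: u + v); rewrite glin => gl.
  have gr : (fun n => a *: g n u + g n v) @ \oo --> a *: G u + G v.
    by apply: cvgD => //; apply: cvgZl_tmp.
  exact: cvg_unique _ gl gr.
have [_ [M [M0 g0M]]] := bg 0%N.
exists (M + `|d 0%N|); split; first by rewrite addr_ge0.
move=> x; rewrite -[G x](subrKC (g 0%N x)) mulrDl (le_trans (ler_normD _ _)) // lerD //.
by rewrite distrC (le_trans (gGd _ _)) // ler_wpM2r // ler_norm.
Unshelve. all: by end_near.
Qed.

Section Bicommutant.
Variables (R : realType) (V : normedModType R).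
Implicit Types (S : set (V -> V)) (f g : V -> V).

Definition commutant S g :=
  bounded_linear g /\ forall f, S f -> forall v, g (f v) = f (g v).

Definition bicommutant S := commutant (commutant S).

Lemma bicommutant0 S : bicommutant S 0.
Proof.
split; first exact: bounded_linear0.
by move=> g [[lg _] _] v; rewrite /= linear_op0.
Qed.

Lemma bicommutant_id S : bicommutant S id.
Proof. by split; first exact: bounded_linear_id. Qed.

Lemma bicommutantD S f g : bicommutant S f -> bicommutant S g -> bicommutant S (f + g).
Proof.
move=> [bf cf] [bg cg]; split; first exact: bounded_linearD.
by move=> h ch v; rewrite !addrfctE (cf h ch) (cg h ch) (linear_opD ch.1.1).
Qed.

Lemma bicommutantN S f : bicommutant S f -> bicommutant S (- f).
Proof.
move=> [bf cf]; split; first exact: bounded_linearN.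
by move=> h ch v; rewrite !opprfctE (cf h ch) (linear_opN ch.1.1).
Qed.

Lemma bicommutantZ S (r : R) f : bicommutant S f -> bicommutant S (r *: f).
Proof.
move=> [bf cf]; split; first exact: bounded_linearZ.
by move=> h ch v; rewrite !scalrfctE (cf h ch) (linear_opZ ch.1.1).
Qed.

Lemma bicommutant_comp S f g :
  bicommutant S f -> bicommutant S g -> bicommutant S (f \o g).
Proof.
move=> [bf cf] [bg cg]; split; first exact: bounded_linear_comp.
by move=> h ch v /=; rewrite (cg h ch) (cf h ch).
Qed.

Lemma sub_bicommutant S : S `<=` commutant S -> S `<=` bicommutant S.
Proof. by move=> cS f Sf; split=> [|g [_ cg] v]; [case: (cS f Sf) | rewrite (cg f)]. Qed.

Lemma bicommutant_sub_commutant S :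
  S `<=` commutant S -> bicommutant S `<=` commutant S.
Proof. by move=> cS f [bf cf]; split=> // g Sg; apply/cf/cS. Qed.

(* The proof [cS] is a parameter of the type so that the commutative ring
   structure, which needs it, can be canonical. *)
Record bicomm S (cS : S `<=` commutant S) :=
  Bicomm { bcval : V -> V; bcvalP : bicommutant S bcval }.

Section BicommRing.
Variables (S : set (V -> V)) (cS : S `<=` commutant S).
Local Notation K := (bicomm cS).
Implicit Types x y z : K.

Lemma bicomm_ext x y : bcval x = bcval y -> x = y.
Proof.
case: x y => f fS [g gS] /= fg; subst g; congr Bicomm.
exact: Prop_irrelevance.
Qed.

HB.instance Definition _ := gen_eqMixin K.
HB.instance Definition _ := gen_choiceMixin K.

Definition bc0 : K := Bicomm cS (bicommutant0 S).
Definition bcadd x y : K := Bicomm cS (bicommutantD (bcvalP x) (bcvalP y)).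
Definition bcopp x : K := Bicomm cS (bicommutantN (bcvalP x)).
Definition bc1 : K := Bicomm cS (bicommutant_id S).
Definition bcmul x y : K := Bicomm cS (bicommutant_comp (bcvalP x) (bcvalP y)).

Lemma bcaddA : associative bcadd.
Proof. by move=> x y z; apply: bicomm_ext; rewrite /= addrA. Qed.
Lemma bcaddC : commutative bcadd.
Proof. by move=> x y; apply: bicomm_ext; rewrite /= addrC. Qed.
Lemma bc0add : left_id bc0 bcadd.
Proof. by move=> x; apply: bicomm_ext; rewrite /= add0r. Qed.
Lemma bcoppK : left_inverse bc0 bcopp bcadd.
Proof. by move=> x; apply: bicomm_ext; rewrite /= addNr. Qed.
HB.instance Definition _ := GRing.isZmodule.Build K bcaddA bcaddC bc0add bcoppK.

Lemma bcmulA : associative bcmul.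
Proof. by move=> x y z; apply: bicomm_ext. Qed.
Lemma bcmulC : commutative bcmul.
Proof.
move=> x y; apply: bicomm_ext; apply/funext => v /=.
by apply: (bcvalP x).2; apply: bicommutant_sub_commutant (bcvalP y).
Qed.
Lemma bc1mul : left_id bc1 bcmul.
Proof. by move=> x; apply: bicomm_ext. Qed.
Lemma bcmulDl : left_distributive bcmul bcadd.
Proof. by move=> x y z; apply: bicomm_ext. Qed.
HB.instance Definition _ :=
  GRing.Zmodule_isComPzRing.Build K bcmulA bcmulC bc1mul bcmulDl.

Definition bcscalar (r : R) : K := Bicomm cS (bicommutantZ r (bicommutant_id S)).

Lemma bcscalarB : zmod_morphism bcscalar.
Proof. by move=> r q; apply: bicomm_ext; apply/funext => v; rewrite /= scalerBl. Qed.
Lemma bcscalarM : monoid_morphism bcscalar.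
Proof.
split; first by apply: bicomm_ext; apply/funext => v; rewrite /= scale1r.
by move=> r q; apply: bicomm_ext; apply/funext => v; rewrite /= !scalrfctE scalerA.
Qed.
HB.instance Definition _ := GRing.isZmodMorphism.Build R K bcscalar bcscalarB.
HB.instance Definition _ := GRing.isMonoidMorphism.Build R K bcscalar bcscalarM.

Definition bcnorm x := opnorm (bcval x).

Lemma bounded_bcval x : bounded_linear (bcval x). Proof. exact: (bcvalP x).1. Qed.
Lemma bcnorm_ge0 x : 0 <= bcnorm x. Proof. exact/opnorm_ge0/bounded_bcval. Qed.
Lemma bcnorm0 : bcnorm 0 = 0. Proof. exact: opnorm0. Qed.
Lemma bcnorm1 : bcnorm 1 <= 1. Proof. exact: opnorm_id. Qed.
Lemma bcnormD x y : bcnorm (x + y) <= bcnorm x + bcnorm y.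
Proof. exact/opnormD/bounded_bcval/bounded_bcval. Qed.
Lemma bcnormN x : bcnorm (- x) <= bcnorm x.
Proof. exact/opnormN/bounded_bcval. Qed.
Lemma bcnormM x y : bcnorm (x * y) <= bcnorm x * bcnorm y.
Proof. exact/opnorm_comp/bounded_bcval/bounded_bcval. Qed.
Lemma bcnorm_scalarM r x : bcnorm (bcscalar r * x) <= `|r| * bcnorm x.
Proof. exact/opnormZ/bounded_bcval. Qed.
Lemma bcnorm_eq0 x : bcnorm x <= 0 -> x = 0.
Proof.
move=> x0; apply: bicomm_ext; apply/funext => v; apply/eqP; rewrite -normr_le0.
by rewrite (le_trans (opnormP _ (bounded_bcval x))) // mulr_le0_ge0.
Qed.
End BicommRing.
End Bicommutant.
Arguments bcval {R V S cS}.

Lemma bicomm_cauchy_lim (R : realType) (V : completeNormedModType R)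
    (S : set (V -> V)) (cS : S `<=` commutant S) (x : nat -> bicomm cS) (d : nat -> R) :
  d @ \oo --> 0 -> (forall M N, (M <= N)%N -> bcnorm (x N - x M) <= d M) ->
  exists l, forall N, bcnorm (x N - l) <= d N.
Proof.
move=> d0 xd.
have d_ge0 N : 0 <= d N by rewrite (le_trans (bcnorm_ge0 (x N - x N))) // xd.
have [|G bG xG] := bounded_linear_lim (g := bcval \o x) (fun N => bounded_bcval (x N)) d0.
  move=> M N MN v; apply: le_trans (opnormP v (bounded_bcval (x N - x M))) _.
  by rewrite ler_wpM2r // xd.
have GS : bicommutant S G.
  by split=> // h ch; apply: commute_lim d0 xG ch.1 (fun N => (bcvalP (x N)).2 h ch).
by exists (Bicomm cS GS) => N; apply: opnorm_le_mul => //= v; apply: xG.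
Qed.

Lemma quat_eta (A : Type) (p : quat A) : p = Quat (q0 p) (q1 p) (q2 p) (q3 p).
Proof. by case: p. Qed.

Section QuatRing.
Variable K : comPzRingType.
Implicit Types p q : quat K.

HB.instance Definition _ := gen_eqMixin (quat K).
HB.instance Definition _ := gen_choiceMixin (quat K).

Lemma quat_addA : associative (@qadd K).
Proof. by move=> [????] [????] [????]; rewrite /qadd /=; congr Quat; ring. Qed.
Lemma quat_addC : commutative (@qadd K).
Proof. by move=> [????] [????]; rewrite /qadd /=; congr Quat; ring. Qed.
Lemma quat_add0 : left_id (Quat 0 0 0 0) (@qadd K).
Proof. by move=> [????]; rewrite /qadd /=; congr Quat; ring. Qed.
Lemma quat_addN : left_inverse (Quat 0 0 0 0) (@qopp K) (@qadd K).
Proof. by move=> [????]; rewrite /qadd /=; congr Quat; ring. Qed.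
HB.instance Definition _ :=
  GRing.isZmodule.Build (quat K) quat_addA quat_addC quat_add0 quat_addN.

Definition quat_mul p q : quat K := qmulG (fun a b : K => a * b) p q.

Lemma quat_mulA : associative quat_mul.
Proof. by move=> [????] [????] [????]; rewrite /quat_mul /qmulG /=; congr Quat; ring. Qed.
Lemma quat_mul1 : left_id (Quat 1 0 0 0) quat_mul.
Proof. by move=> [????]; rewrite /quat_mul /qmulG /=; congr Quat; ring. Qed.
Lemma quat_mulr1 : right_id (Quat 1 0 0 0) quat_mul.
Proof. by move=> [????]; rewrite /quat_mul /qmulG /=; congr Quat; ring. Qed.
Lemma quat_mulDl : left_distributive quat_mul (@qadd K).
Proof.
by move=> [????] [????] [????]; rewrite /quat_mul /qmulG /qadd /=; congr Quat; ring.
Qed.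
Lemma quat_mulDr : right_distributive quat_mul (@qadd K).
Proof.
by move=> [????] [????] [????]; rewrite /quat_mul /qmulG /qadd /=; congr Quat; ring.
Qed.
HB.instance Definition _ :=
  GRing.Zmodule_isPzRing.Build (quat K) quat_mulA quat_mul1 quat_mulr1 quat_mulDl quat_mulDr.

Lemma quat_addE p q : p + q = qadd p q. Proof. by []. Qed.
Lemma quat_oppE p : - p = qopp p. Proof. by []. Qed.
Lemma quat_mulE p q : p * q = qmulG (fun a b : K => a * b) p q. Proof. by []. Qed.

Lemma quat_iter_mul p n : iter n (quat_mul p) 1 = p ^+ n.
Proof. by elim: n => //= n ->; rewrite exprS. Qed.

Lemma qsumE m n (F : nat -> quat K) : qsum m n F = \sum_(m <= i < n) F i.
Proof.
have sum_comp (f : quat K -> K) : f 0 = 0 -> {morph f : p q / p + q} ->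
    f (\sum_(m <= i < n) F i) = \sum_(m <= i < n) f (F i).
  by move=> f0 fD; apply: big_morph.
case E: (\sum_(m <= i < n) F i) => [????].
by rewrite /qsum -(sum_comp (@q0 K)) // -(sum_comp (@q1 K)) // -(sum_comp (@q2 K)) //
  -(sum_comp (@q3 K)) // E.
Qed.

Definition qscalar (x : K) : quat K := Quat x 0 0 0.

Lemma qscalarB : zmod_morphism qscalar.
Proof. by move=> x y; congr Quat; rewrite /=; ring. Qed.
Lemma qscalarM : monoid_morphism qscalar.
Proof. by split=> // x y; congr Quat; rewrite /=; ring. Qed.
HB.instance Definition _ := GRing.isZmodMorphism.Build K (quat K) qscalar qscalarB.
HB.instance Definition _ := GRing.isMonoidMorphism.Build K (quat K) qscalar qscalarM.

Lemma qscalarC x p : GRing.comm (qscalar x) p.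
Proof. by case: p => ????; congr Quat; rewrite /=; ring. Qed.

Definition quat_sqnorm p := q0 p ^+ 2 + q1 p ^+ 2 + q2 p ^+ 2 + q3 p ^+ 2.

Lemma quat_addconj p : p + qconj p = qscalar (q0 p *+ 2).
Proof. by case: p => ????; congr Quat; rewrite /=; ring. Qed.
Lemma quat_mulconj p : p * qconj p = qscalar (quat_sqnorm p).
Proof. by case: p => ????; congr Quat; rewrite /quat_sqnorm /=; ring. Qed.
Lemma quat_conjmul p : qconj p * p = qscalar (quat_sqnorm p).
Proof. by case: p => ????; congr Quat; rewrite /quat_sqnorm /=; ring. Qed.
End QuatRing.

Section QuatMap.
Variables (K L : comPzRingType) (f : {rmorphism K -> L}).

Definition quat_map (p : quat K) : quat L := Quat (f (q0 p)) (f (q1 p)) (f (q2 p)) (f (q3 p)).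

Lemma quat_mapB : zmod_morphism quat_map.
Proof. by move=> p q; congr Quat; rewrite /= !rmorphB. Qed.
Lemma quat_mapM : monoid_morphism quat_map.
Proof.
split; first by congr Quat; rewrite /= ?rmorph1 ?rmorph0.
by move=> p q; congr Quat; rewrite /= !(rmorphB, rmorphD, rmorphM).
Qed.
HB.instance Definition _ := GRing.isZmodMorphism.Build (quat K) (quat L) quat_map quat_mapB.
HB.instance Definition _ := GRing.isMonoidMorphism.Build (quat K) (quat L) quat_map quat_mapM.
End QuatMap.

Section Lucas.
Variables (K : comPzRingType) (a b : K).

Fixpoint lucas_pair m : K * K :=
  if m is m'.+1 then ((lucas_pair m').2, a * (lucas_pair m').2 - b * (lucas_pair m').1)
  else (0, 1).
Definition lucas m := (lucas_pair m).1.

Lemma lucas0 : lucas 0 = 0. Proof. by []. Qed.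
Lemma lucas1 : lucas 1 = 1. Proof. by []. Qed.
Lemma lucasSS m : lucas m.+2 = a * lucas m.+1 - b * lucas m. Proof. by []. Qed.
End Lucas.

Section PowConjSum.
Variables (K : comPzRingType) (t : quat K).

Definition pow_conj_sum m := \sum_(1 <= k < m.+1) t ^+ (m - k) * qconj t ^+ (k - 1).

Lemma pow_conj_sum_lucas m :
  pow_conj_sum m = qscalar (lucas (q0 t *+ 2) (quat_sqnorm t) m).
Proof.
have sumS n : pow_conj_sum n.+1 = t * pow_conj_sum n + qconj t ^+ n.
  rewrite /pow_conj_sum big_nat_recr //= subnn expr0 mul1r subn1 mulr_sumr.
  congr (_ + _); apply: eq_big_nat => k /andP [_ kn].
  by rewrite subSn // exprS mulrA.
have sumSS n : pow_conj_sum n.+2 =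
    qscalar (q0 t *+ 2) * pow_conj_sum n.+1 - qscalar (quat_sqnorm t) * pow_conj_sum n.
  rewrite (sumS n.+1) -quat_addconj -quat_conjmul mulrDl -addrA; congr (_ + _).
  by rewrite (sumS n) mulrDr !mulrA addrAC subrr add0r -exprS.
suff : pow_conj_sum m = qscalar (lucas (q0 t *+ 2) (quat_sqnorm t) m) /\
       pow_conj_sum m.+1 = qscalar (lucas (q0 t *+ 2) (quat_sqnorm t) m.+1) by case.
elim: m => [|m [IH1 IH2]].
  by rewrite /pow_conj_sum big_geq // big_nat1 !expr0 mulr1 rmorph0 rmorph1.
by split=> //; rewrite sumSS IH1 IH2 lucasSS rmorphB !rmorphM.
Qed.
End PowConjSum.

Section Telescope.
Variables (K : comPzRingType) (S U : quat K) (a b : K).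
Hypothesis SU : S * U = 1.

Definition Qc := S * S - S * qscalar a + qscalar b.

Definition lucas_series N := \sum_(1 <= m < N.+1) qscalar (lucas a b m) * U ^+ m.+1.

Lemma Qc_lucas_series N : Qc * lucas_series N =
  1 - qscalar (lucas a b N.+1) * U ^+ N + qscalar (b * lucas a b N) * U ^+ N.+1.
Proof.
have QcU n : Qc * U ^+ n.+2 = U ^+ n - qscalar a * U ^+ n.+1 + qscalar b * U ^+ n.+2.
  have SUS k : S * U ^+ k.+1 = U ^+ k by rewrite exprS mulrA SU mul1r.
  by rewrite /Qc -(qscalarC a S) mulrDl mulrBl -!mulrA !SUS.
elim: N => [|N IH].
  rewrite /lucas_series big_geq // mulr0 lucas1 lucas0 mulr0 rmorph0 mul0r addr0.
  by rewrite rmorph1 mul1r subrr.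
have regroup (A B C D : quat K) : 1 - A + B + (A - C + D) = 1 - (C - B) + D.
  by rewrite opprB !addrA; congr (_ + _); rewrite (addrAC (1 - A)) subrK.
rewrite /lucas_series big_nat_recr // -/(lucas_series N) mulrDr IH mulrA -qscalarC.
rewrite -mulrA QcU mulrDr mulrBr (mulrA _ (qscalar a)) (mulrA _ (qscalar b)) -!rmorphM.
by rewrite lucasSS rmorphB mulrBl regroup [_ * a]mulrC [_ * b]mulrC.
Qed.

Hypothesis US : U * S = 1.

Lemma Qc_lucas_series_comm N : GRing.comm Qc (lucas_series N).
Proof.
have US_comm : GRing.comm U S by rewrite /GRing.comm SU US.
have U_scalar x : GRing.comm U (qscalar x) by apply/commr_sym/qscalarC.
apply: commr_sum => m _; apply: commrM; first exact/commr_sym/qscalarC.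
apply/commrX/commr_sym; rewrite /Qc.
by apply: commrD => //; apply: commrB; apply: commrM.
Qed.
End Telescope.

Section QuatNorm.
Variables (R : realType) (V : normedModType R) (S : set (V -> V)).
Variable cS : S `<=` commutant S.
Local Notation K := (bicomm cS).
Implicit Types (x y : K) (p q : quat K).

Lemma bcnormB x y : bcnorm (x - y) <= bcnorm x + bcnorm y.
Proof. by rewrite (le_trans (bcnormD _ _)) // lerD // bcnormN. Qed.

Definition qnorm p := bcnorm (q0 p) + bcnorm (q1 p) + bcnorm (q2 p) + bcnorm (q3 p).

Lemma qnorm_ge0 p : 0 <= qnorm p.
Proof. by rewrite /qnorm !addr_ge0 ?bcnorm_ge0. Qed.

Lemma bcnorm_le_qnorm p :
  [/\ bcnorm (q0 p) <= qnorm p, bcnorm (q1 p) <= qnorm p,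
      bcnorm (q2 p) <= qnorm p & bcnorm (q3 p) <= qnorm p].
Proof.
have := bcnorm_ge0 (q0 p); have := bcnorm_ge0 (q1 p).
have := bcnorm_ge0 (q2 p); have := bcnorm_ge0 (q3 p).
by rewrite /qnorm; split; lra.
Qed.

Lemma qnorm_eq0 p : qnorm p <= 0 -> p = 0.
Proof.
move=> p0; have [n0 n1 n2 n3] := bcnorm_le_qnorm p.
by case: p p0 n0 n1 n2 n3 => ???? /= p0 *; congr Quat; apply: bcnorm_eq0; apply: le_trans p0.
Qed.

Lemma qnormD p q : qnorm (p + q) <= qnorm p + qnorm q.
Proof.
rewrite /qnorm quat_addE /=.
apply: le_trans; first by apply: lerD4; apply: bcnormD.
lra.
Qed.

Lemma qnormN p : qnorm (- p) <= qnorm p.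
Proof. by rewrite /qnorm quat_oppE /=; apply: lerD4; apply: bcnormN. Qed.

Lemma qnormB p q : qnorm (p - q) <= qnorm p + qnorm q.
Proof. by rewrite (le_trans (qnormD _ _)) // lerD // qnormN. Qed.

Lemma qnorm_conj p : qnorm (qconj p) <= qnorm p.
Proof. by rewrite /qnorm /=; apply: lerD4; rewrite ?bcnormN. Qed.

Lemma qnorm_qscalar x : qnorm (qscalar x) = bcnorm x.
Proof. by rewrite /qnorm /= bcnorm0 !addr0. Qed.

Lemma qnorm1 : qnorm 1 <= 1.
Proof. by rewrite qnorm_qscalar bcnorm1. Qed.

Lemma qnormM p q : qnorm (p * q) <= qnorm p * qnorm q.
Proof.
rewrite /qnorm quat_mulE /=.
apply: le_trans.
  by apply: lerD4; repeat first
    [ apply: (le_trans (bcnormB _ _)); apply: lerD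
    | apply: (le_trans (bcnormD _ _)); apply: lerD
    | apply: bcnormM ].
lra.
Qed.

Lemma qnorm_exp p n : qnorm (p ^+ n) <= qnorm p ^+ n.
Proof.
elim: n => [|n IH]; first by rewrite !expr0 qnorm1.
by rewrite exprS (le_trans (qnormM _ _)) // exprS ler_wpM2l ?qnorm_ge0.
Qed.

Lemma qnorm_sum m n (F : nat -> quat K) :
  qnorm (\sum_(m <= i < n) F i) <= \sum_(m <= i < n) qnorm (F i).
Proof.
apply: (big_ind2 (fun p r => qnorm p <= r)) => //.
- by rewrite qnorm_qscalar bcnorm0.
- by move=> p1 r1 p2 r2 *; rewrite (le_trans (qnormD _ _)) // lerD.
Qed.

Lemma qnorm_qscalar_map x (w : quat R) :
  qnorm (qscalar x * quat_map (bcscalar cS) w) <=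
  bcnorm x * (`|q0 w| + `|q1 w| + `|q2 w| + `|q3 w|).
Proof.
rewrite /qnorm quat_mulE /=.
apply: le_trans; first by apply: lerD4; rewrite !(mul0r, subr0, addr0, add0r) mulrC;
  apply: bcnorm_scalarM.
lra.
Qed.
End QuatNorm.

Section RealQuaternions.
Variable R : realType.
Implicit Types p q s w : H R.

Lemma hpowE p n : hpow p n = p ^+ n.
Proof. exact: quat_iter_mul. Qed.

Lemma habs_sqr s : habs s ^+ 2 = quat_sqnorm s.
Proof. by rewrite /habs sqr_sqrtr // !addr_ge0 // sqr_ge0. Qed.

Lemma mul_hinv s : habs s != 0 -> s * hinv s = 1.
Proof.
move=> s0; have : quat_sqnorm s != 0 by rewrite -habs_sqr expf_neq0.
rewrite /hinv habs_sqr; case: s {s0} => ????; rewrite /quat_sqnorm /= => n0.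
by congr Quat; rewrite /=; field.
Qed.

Lemma hinv_mul s : habs s != 0 -> hinv s * s = 1.
Proof.
move=> s0; have : quat_sqnorm s != 0 by rewrite -habs_sqr expf_neq0.
rewrite /hinv habs_sqr; case: s {s0} => ????; rewrite /quat_sqnorm /= => n0.
by congr Quat; rewrite /=; field.
Qed.

Lemma habsM p q : habs (p * q) = habs p * habs q.
Proof.
rewrite /habs -sqrtrM; last by rewrite !addr_ge0 // sqr_ge0.
by congr Num.sqrt; rewrite quat_mulE /=; ring.
Qed.

Lemma habs1 : habs (1 : H R) = 1.
Proof. by rewrite /habs /= expr1n !expr0n /= !addr0 sqrtr1. Qed.

Lemma habs_exp p n : habs (p ^+ n) = habs p ^+ n.
Proof. by elim: n => [|n IH]; rewrite ?habs1 // !exprS habsM IH. Qed.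

Lemma habs_hinv s : habs s != 0 -> habs (hinv s) = (habs s)^-1.
Proof.
by move=> s0; apply: (mulIf s0); rewrite -habsM hinv_mul // habs1 mulVf.
Qed.

Lemma sum_abs_le_habs w : `|q0 w| + `|q1 w| + `|q2 w| + `|q3 w| <= 4 * habs w.
Proof.
have le_habs (c : R) : c ^+ 2 <= quat_sqnorm w -> `|c| <= habs w.
  by move=> cw; rewrite -sqrtr_sqr ler_wsqrtr.
have := sqr_ge0 (q0 w); have := sqr_ge0 (q1 w).
have := sqr_ge0 (q2 w); have := sqr_ge0 (q3 w).
rewrite /quat_sqnorm in le_habs => *.
suff : [/\ `|q0 w| <= habs w, `|q1 w| <= habs w, `|q2 w| <= habs w & `|q3 w| <= habs w].
  by case; lra.
by split; apply: le_habs; lra.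
Qed.
End RealQuaternions.

(* [ring] proves identities in the zmodule [M] once [M] is embedded additively
   in the commutative ring [K ⋉ M]. *)
Section TrivialExtension.
Variables (K : comPzRingType) (M : lmodType K).

Record triv_ext := TrivExt { te_scalar : K; te_vec : M }.

HB.instance Definition _ := gen_eqMixin triv_ext.
HB.instance Definition _ := gen_choiceMixin triv_ext.

Definition te_add x y := TrivExt (te_scalar x + te_scalar y) (te_vec x + te_vec y).
Definition te_opp x := TrivExt (- te_scalar x) (- te_vec x).
Definition te_mul x y :=
  TrivExt (te_scalar x * te_scalar y) (te_scalar x *: te_vec y + te_scalar y *: te_vec x).

Lemma te_addA : associative te_add.
Proof. by move=> [??] [??] [??]; rewrite /te_add /= !addrA. Qed.
Lemma te_addC : commutative te_add.
Proof. by move=> [??] [??]; rewrite /te_add /=; congr TrivExt; apply: addrC. Qed.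
Lemma te_add0 : left_id (TrivExt 0 0) te_add.
Proof. by move=> [??]; rewrite /te_add /= !add0r. Qed.
Lemma te_addN : left_inverse (TrivExt 0 0) te_opp te_add.
Proof. by move=> [??]; rewrite /te_add /= !addNr. Qed.
HB.instance Definition _ := GRing.isZmodule.Build triv_ext te_addA te_addC te_add0 te_addN.

Lemma te_mulA : associative te_mul.
Proof.
move=> [a u] [b v] [c w]; rewrite /te_mul /= mulrA; congr TrivExt.
by rewrite !scalerDr !scalerA addrA [c * a]mulrC [c * b]mulrC [b * c]mulrC addrAC.
Qed.
Lemma te_mulC : commutative te_mul.
Proof. by move=> [a u] [b v]; rewrite /te_mul /= mulrC addrC. Qed.
Lemma te_mul1 : left_id (TrivExt 1 0) te_mul.
Proof. by move=> [a u]; rewrite /te_mul /= mul1r scale1r scaler0 addr0. Qed.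
Lemma te_mulDl : left_distributive te_mul te_add.
Proof.
move=> [a u] [b v] [c w]; rewrite /te_mul /te_add /= mulrDl; congr TrivExt.
by rewrite scalerDl scalerDr addrACA.
Qed.
HB.instance Definition _ :=
  GRing.Zmodule_isComPzRing.Build triv_ext te_mulA te_mulC te_mul1 te_mulDl.

Definition te_embed (v : M) : triv_ext := TrivExt 0 v.

Lemma te_embedD u v : te_embed (u + v) = te_embed u + te_embed v.
Proof. by rewrite /te_embed; congr TrivExt; rewrite /= addr0. Qed.
Lemma te_embedN u : te_embed (- u) = - te_embed u.
Proof. by rewrite /te_embed; congr TrivExt; rewrite /= oppr0. Qed.

Lemma te_embed_inj : injective te_embed.
Proof. by move=> u v []. Qed.
End TrivialExtension.

Section QuaternionOperators.
Variables (R : realType) (V : normedModType R) (T : qop V).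
Hypothesis hT : in_BC T.

Definition qop_components : set (V -> V) :=
  [set f | [\/ f = q0 T, f = q1 T, f = q2 T | f = q3 T]].

Lemma qop_components_mem f : qop_components f -> f \in [:: q0 T; q1 T; q2 T; q3 T].
Proof. by case=> ->; rewrite !inE eqxx ?orbT. Qed.

Lemma qop_components_commute : qop_components `<=` commutant qop_components.
Proof.
case: hT => b0 b1 b2 b3 cT f Tf; split; first by case: Tf => ->; apply/bounded_opP.
move=> g Tg v.
exact: (congr1 (fun h => h v) (cT f g (qop_components_mem Tf) (qop_components_mem Tg))).
Qed.

Local Notation K := (bicomm qop_components_commute).
Implicit Types p q : quat K.

Definition qop_of p : qop V :=
  Quat (bcval (q0 p)) (bcval (q1 p)) (bcval (q2 p)) (bcval (q3 p)).

Let bcT f (Tf : qop_components f) : K :=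
  Bicomm _ (sub_bicommutant qop_components_commute Tf).

Definition T_quat : quat K :=
  Quat (bcT (Or41 _ _ _ erefl)) (bcT (Or42 _ _ _ erefl))
       (bcT (Or43 _ _ _ erefl)) (bcT (Or44 _ _ _ erefl)).

Lemma qop_of_T : qop_of T_quat = T.
Proof. by rewrite [RHS]quat_eta. Qed.

Lemma qop_ofD p q : qadd (qop_of p) (qop_of q) = qop_of (p + q). Proof. by []. Qed.
Lemma qop_ofB p q : qsub (qop_of p) (qop_of q) = qop_of (p - q). Proof. by []. Qed.
Lemma qop_ofM p q : qop_mul (qop_of p) (qop_of q) = qop_of (p * q). Proof. by []. Qed.
Lemma qop_of_conj p : qconj (qop_of p) = qop_of (qconj p). Proof. by []. Qed.
Lemma qop_of1 : qop_id V = qop_of 1. Proof. by []. Qed.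
Lemma qopnorm_qop_of p : qopnorm (qop_of p) = qnorm p. Proof. by []. Qed.

Lemma qop_of_exp p n : qop_pow (qop_of p) n = qop_of (p ^+ n).
Proof. by rewrite /qop_pow -quat_iter_mul; elim: n => //= n ->. Qed.

Lemma qop_of_sum m n (F : nat -> qop V) (G : nat -> quat K) :
  (forall i, F i = qop_of (G i)) -> qsum m n F = qop_of (\sum_(m <= i < n) G i).
Proof.
move=> FG; have bcval_sum (f : quat K -> K) :
    bcval (\sum_(m <= i < n) f (G i)) = \sum_(m <= i < n) bcval (f (G i)).
  by apply: (big_morph bcval) => [x y|].
by rewrite -qsumE /qop_of /qsum /= !bcval_sum; congr Quat; apply: eq_bigr => i _; rewrite FG.
Qed.

Lemma qop_of_mulr p (w : H R) :
  qoph_mul (qop_of p) w = qop_of (p * quat_map (bcscalar qop_components_commute) w).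
Proof.
rewrite /qoph_mul /qop_of quat_mulE /qmulG /=.
by congr Quat; rewrite !(linear_op_compZ (bounded_bcval _).1).
Qed.

Lemma qop_of_mull (w : H R) p :
  hqop_mul w (qop_of p) = qop_of (quat_map (bcscalar qop_components_commute) w * p).
Proof. by []. Qed.

Lemma bounded_qop_of p : bounded_qop (qop_of p).
Proof. by split; apply/bounded_opP/bounded_bcval. Qed.

Lemma qop_apply_qop_of1 x : qop_apply (qop_of 1) x = x.
Proof.
case: x => ????; rewrite /qop_apply /qmulG /=.
by congr Quat; rewrite ?subr0 ?sub0r ?addr0 ?add0r.
Qed.

Lemma qop_apply_qop_ofM p q x :
  qop_apply (qop_of p) (qop_apply (qop_of q) x) = qop_apply (qop_of (p * q)) x.
Proof.
rewrite /qop_apply /qop_of quat_mulE /qmulG /=.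
rewrite !(linear_opB (bounded_bcval _).1, linear_opD (bounded_bcval _).1).
by congr Quat; apply: te_embed_inj; rewrite !(te_embedD, te_embedN); ring.
Qed.

Local Notation embed := (quat_map (bcscalar qop_components_commute)).

Lemma Qcs_qop_of p s :
  Qcs (qop_of p) s = qop_of (Qc (embed s) (q0 p *+ 2) (quat_sqnorm p)).
Proof.
rewrite /Qcs qop_of1 qop_of_conj qop_ofD !qop_of_mull qop_ofB qop_ofM qop_ofD.
by rewrite mulr1 rmorphM quat_addconj quat_mulconj.
Qed.

Lemma series_right_qop_of p s N : series_right (qop_of p) s N =
  qop_of (lucas_series (embed (hinv s)) (q0 p *+ 2) (quat_sqnorm p) N).
Proof.
apply: qop_of_sum => m; rewrite -pow_conj_sum_lucas mulr_suml.
apply: qop_of_sum => k.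
by rewrite qop_of_conj !qop_of_exp qop_ofM qop_of_mulr hpowE rmorphXn.
Qed.

Lemma series_left_qop_of p s N : series_left (qop_of p) s N =
  qop_of (lucas_series (embed (hinv s)) (q0 p *+ 2) (quat_sqnorm p) N).
Proof.
apply: qop_of_sum => m; rewrite qscalarC -pow_conj_sum_lucas mulr_sumr.
apply: qop_of_sum => k.
by rewrite qop_of_conj !qop_of_exp qop_ofM qop_of_mull hpowE rmorphXn.
Qed.
End QuaternionOperators.

Section QuatLimits.
Variables (R : realType) (V : completeNormedModType R) (S : set (V -> V)).
Variable cS : S `<=` commutant S.
Local Notation K := (bicomm cS).

Lemma quat_cauchy_lim (F : nat -> quat K) (d : nat -> R) :
  d @ \oo --> 0 -> (forall M N, (M <= N)%N -> qnorm (F N - F M) <= d M) ->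
  exists l, forall N, qnorm (F N - l) <= 4 * d N.
Proof.
move=> d0 Fd.
have comp_lim (c : quat K -> K) : (forall p, bcnorm (c p) <= qnorm p) ->
    {morph c : p q / p - q} -> exists l, forall N, bcnorm (c (F N) - l) <= d N.
  move=> cn cB; apply: bicomm_cauchy_lim d0 _ => M N MN.
  by rewrite -cB (le_trans (cn _)) ?Fd.
have [l0 Fl0] : exists l, forall N, bcnorm (q0 (F N) - l) <= d N.
  by apply: comp_lim => // p; case: (bcnorm_le_qnorm p).
have [l1 Fl1] : exists l, forall N, bcnorm (q1 (F N) - l) <= d N.
  by apply: comp_lim => // p; case: (bcnorm_le_qnorm p).
have [l2 Fl2] : exists l, forall N, bcnorm (q2 (F N) - l) <= d N.
  by apply: comp_lim => // p; case: (bcnorm_le_qnorm p).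
have [l3 Fl3] : exists l, forall N, bcnorm (q3 (F N) - l) <= d N.
  by apply: comp_lim => // p; case: (bcnorm_le_qnorm p).
exists (Quat l0 l1 l2 l3) => N.
by have := Fl0 N; have := Fl1 N; have := Fl2 N; have := Fl3 N; rewrite /qnorm /=; lra.
Qed.

Lemma approx_inverse (Q l : quat K) (F : nat -> quat K) (e1 e2 : nat -> R) :
  e1 @ \oo --> 0 -> e2 @ \oo --> 0 ->
  (forall N, qnorm (F N - l) <= e1 N) -> (forall N, qnorm (Q * F N - 1) <= e2 N) ->
  (forall N, GRing.comm Q (F N)) -> Q * l = 1 /\ l * Q = 1.
Proof.
move=> e10 e20 Fl QF cQF.
have e0 : (fun N => qnorm Q * e1 N + e2 N) @ \oo --> 0.
  rewrite -[0](addr0 0) -[X in X + _](mulr0 (qnorm Q)).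
  by apply: cvgD => //; apply: cvgMl_tmp.
have lF N : qnorm (l - F N) <= e1 N by rewrite -opprB (le_trans (qnormN _)).
split; apply/eqP; rewrite -subr_eq0; apply/eqP/qnorm_eq0; apply: (le0_of_cvg0 e0) => N.
  rewrite -[Q * l](subrK (Q * F N)) -mulrBr -addrA (le_trans (qnormD _ _)) // lerD //.
  by rewrite (le_trans (qnormM _ _)) // ler_wpM2l ?qnorm_ge0.
rewrite -[l * Q](subrK (F N * Q)) -mulrBl -addrA -(cQF N) (le_trans (qnormD _ _)) // lerD //.
by rewrite (le_trans (qnormM _ _)) // mulrC ler_wpM2l ?qnorm_ge0.
Qed.
End QuatLimits.

Section Main.
Variables (R : realType) (V : completeNormedModType R) (T : qop V) (s : H R).
Hypotheses (hT : in_BC T) (Ts : qopnorm T < habs s).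

Local Notation cS := (qop_components_commute hT).
Local Notation t := (T_quat hT).
Local Notation a := (q0 t *+ 2).
Local Notation b := (quat_sqnorm t).
Local Notation embed := (quat_map (bcscalar cS)).
Local Notation S := (embed s).
Local Notation U := (embed (hinv s)).
Local Notation tau := (qnorm t).
Local Notation sig := ((habs s)^-1).

Lemma qnorm_T : tau = qopnorm T.
Proof. by rewrite -qopnorm_qop_of qop_of_T. Qed.

Lemma habs_gt0 : 0 < habs s.
Proof. by rewrite (le_lt_trans _ Ts) // -qnorm_T qnorm_ge0. Qed.

Lemma sig_ge0 : 0 <= sig.
Proof. by rewrite invr_ge0 ltW // habs_gt0. Qed.

Lemma SU : S * U = 1.
Proof. by rewrite -rmorphM mul_hinv ?rmorph1 // gt_eqF // habs_gt0. Qed.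

Lemma US : U * S = 1.
Proof. by rewrite -rmorphM hinv_mul ?rmorph1 // gt_eqF // habs_gt0. Qed.

Lemma ratio_bounds : 0 <= tau * sig < 1.
Proof. by rewrite mulr_ge0 ?qnorm_ge0 ?sig_ge0 //= ltr_pdivrMr ?habs_gt0 // mul1r qnorm_T. Qed.

Lemma Qcs_Qc : Qcs T s = qop_of (Qc S a b).
Proof. by have := Qcs_qop_of t s; rewrite qop_of_T. Qed.

Lemma qopnorm_series_right l N :
  qopnorm (qsub (series_right T s N) (qop_of l)) = qnorm (lucas_series U a b N - l).
Proof. by have := series_right_qop_of t s N; rewrite qop_of_T => ->. Qed.

Lemma qopnorm_series_left l N :
  qopnorm (qsub (series_left T s N) (qop_of l)) = qnorm (lucas_series U a b N - l).
Proof. by have := series_left_qop_of t s N; rewrite qop_of_T => ->. Qed.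

Lemma lucas_norm_le m : bcnorm (lucas a b m) <= m%:R * tau ^+ m.-1.
Proof.
rewrite -qnorm_qscalar -pow_conj_sum_lucas (le_trans (qnorm_sum _ _ _)) //.
apply: le_trans (_ : \sum_(1 <= k < m.+1) tau ^+ m.-1 <= _); last first.
  by rewrite sumr_const_nat subn1 mulr_natl.
apply: ler_sum_nat => k /andP [k1 km].
rewrite (le_trans (qnormM _ _)) // (_ : m.-1 = m - k + (k - 1))%N ?exprD; last by lia.
apply: ler_pM; rewrite ?qnorm_ge0 ?(le_trans (qnorm_exp _ _)) //.
by rewrite lerXn2r ?nnegrE ?qnorm_ge0 // qnorm_conj.
Qed.

Lemma qscalar_U_norm_le x n : qnorm (qscalar x * U ^+ n) <= bcnorm x * (4 * sig ^+ n).
Proof.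
rewrite -rmorphXn (le_trans (qnorm_qscalar_map _ _)) // ler_wpM2l ?bcnorm_ge0 //.
by rewrite (le_trans (sum_abs_le_habs _)) // habs_exp habs_hinv ?exprVn // gt_eqF // habs_gt0.
Qed.

Section Geometric.
Variables (th C : R).
Hypotheses (th0 : 0 < th) (th1 : th < 1) (C0 : 0 <= C)
  (HC : forall m, m.+1%:R * (tau * sig) ^+ m <= C * th ^+ m).

Let B := 4 * sig ^+ 2 * C / th.

Let B_ge0 : 0 <= B.
Proof. by rewrite divr_ge0 ?mulr_ge0 ?exprn_ge0 ?sig_ge0 // ltW. Qed.

Lemma lucas_term_le m : qnorm (qscalar (lucas a b m) * U ^+ m.+1) <= B * th ^+ m.
Proof.
case: m => [|m].
  by rewrite lucas0 rmorph0 mul0r qnorm_qscalar bcnorm0 mulr_ge0 ?exprn_ge0 // ltW.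
rewrite (le_trans (qscalar_U_norm_le _ _)) //.
apply: le_trans (ler_wpM2r _ (lucas_norm_le _)) _.
  by rewrite mulr_ge0 ?exprn_ge0 ?sig_ge0.
have -> : B * th ^+ m.+1 = 4 * sig ^+ 2 * (C * th ^+ m).
  by rewrite /B (exprS th); field; rewrite !gt_eqF ?habs_gt0.
have -> : m.+1%:R * tau ^+ m.+1.-1 * (4 * sig ^+ m.+2) =
          4 * sig ^+ 2 * (m.+1%:R * (tau * sig) ^+ m).
  by rewrite /= exprMn -[m.+2]/(2 + m)%N exprD; ring.
by rewrite ler_wpM2l ?mulr_ge0 ?exprn_ge0 ?sig_ge0.
Qed.

Lemma lucas_series_cauchy M N : (M <= N)%N ->
  qnorm (lucas_series U a b N - lucas_series U a b M) <= B * th ^+ M.+1 / (1 - th).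
Proof.
move=> MN; rewrite /lucas_series (big_cat_nat _ (n := M.+1)) //= addrAC subrr add0r.
rewrite (le_trans (qnorm_sum _ _ _)) //.
apply: le_trans (_ : _ <= \sum_(M.+1 <= m < N.+1) B * th ^+ m) _.
  by apply: ler_sum_nat => m _; apply: lucas_term_le.
by rewrite -mulr_sumr -mulrA ler_wpM2l ?B_ge0 // geometric_sum_le // ltW.
Qed.

Lemma Qc_residual_le N :
  qnorm (Qc S a b * lucas_series U a b N - 1) <= (4 * C + bcnorm b * B) * th ^+ N.
Proof.
rewrite (Qc_lucas_series _ _ SU) addrAC (addrAC 1) subrr add0r addrC.
rewrite (le_trans (qnormB _ _)) // [leRHS]mulrDl [leRHS]addrC; apply: lerD.
  rewrite rmorphM -mulrA (le_trans (qnormM _ _)) // qnorm_qscalar -mulrA.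
  by rewrite ler_wpM2l ?bcnorm_ge0 ?lucas_term_le.
rewrite (le_trans (qscalar_U_norm_le _ _)) //.
apply: le_trans (ler_wpM2r _ (lucas_norm_le _)) _.
  by rewrite mulr_ge0 ?exprn_ge0 ?sig_ge0.
have -> : N.+1%:R * tau ^+ N.+1.-1 * (4 * sig ^+ N) = 4 * (N.+1%:R * (tau * sig) ^+ N).
  by rewrite /= exprMn; ring.
by rewrite -mulrA ler_wpM2l.
Qed.

Lemma lucas_series_inverse_geometric : exists l,
  [/\ (fun N => qnorm (lucas_series U a b N - l)) @ \oo --> 0,
      Qc S a b * l = 1 & l * Qc S a b = 1].
Proof.
have th_abs : `|th| < 1 by rewrite ger0_norm ?ltW.
pose d := geometric (B * th / (1 - th)) th.
have Fd M N : (M <= N)%N ->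
    qnorm (lucas_series U a b N - lucas_series U a b M) <= d M.
  by move=> MN; rewrite /d /geometric /= mulrAC -(mulrA B) -exprS; apply: lucas_series_cauchy.
have [l Fl] := quat_cauchy_lim (cvg_geometric _ th_abs) Fd.
have d4 : (fun N => 4 * d N) @ \oo --> 0.
  by rewrite -(mulr0 4); apply: cvgMl_tmp; apply: cvg_geometric.
have res0 : (fun N => (4 * C + bcnorm b * B) * th ^+ N) @ \oo --> 0.
  exact: cvg_geometric.
have [Ql lQ] := approx_inverse d4 res0 Fl Qc_residual_le (Qc_lucas_series_comm a b SU US).
exists l; split=> //; apply: squeeze_cvgr d4; last exact: cvg_cst.
by near=> N; rewrite qnorm_ge0 Fl.
Unshelve. all: by end_near.
Qed.
End Geometric.

Lemma lucas_series_inverse : exists l,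
  [/\ (fun N => qnorm (lucas_series U a b N - l)) @ \oo --> 0,
      Qc S a b * l = 1 & l * Qc S a b = 1].
Proof.
have [th [C [th0 th1 C0 HC]]] := natr_exp_le_geometric ratio_bounds.
exact: lucas_series_inverse_geometric th0 th1 C0 HC.
Qed.
End Main.

Theorem proposition5p3 (R : realType) (V : completeNormedModType R)
  (T : qop V) (s : H R) :
  in_BC T -> qopnorm T < habs s ->
  exists L : qop V,
    bounded_qop L /\
    (fun N => qopnorm (qsub (series_right T s N) L)) @ \oo --> (0 : R) /\
    (fun N => qopnorm (qsub (series_left T s N) L)) @ \oo --> (0 : R) /\
    (forall x : X V, qop_apply (Qcs T s) (qop_apply L x) = x) /\
    (forall x : X V, qop_apply L (qop_apply (Qcs T s) x) = x).
Proof.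
move=> hT Ts; have [l [lim_l Ql lQ]] := lucas_series_inverse hT Ts.
exists (qop_of l); split; first exact: bounded_qop_of.
split; first by rewrite (funext (qopnorm_series_right s l)).
split; first by rewrite (funext (qopnorm_series_left s l)).
by split=> x; rewrite (Qcs_Qc s hT) qop_apply_qop_ofM ?Ql ?lQ qop_apply_qop_of1.
Qed.
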